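(* Let $t\ge 3$ and let $\mathcal{H}$ be an $n$-vertex $3$-uniform hypergraph that does not contain $K_{2,t}$ as a trace. Let $A$ be the set of edges of $\mathcal{H}$ containing at least one pair of vertices whose co-degree in $\mathcal{H}$ is $1$, and let $B=\mathcal{H}\setminus A$. For a vertex $x$, let $N_1(x)=\{z: \exists e\in B,\ \{x,z\}\subseteq e\}$ and $N_2(x)=\{z\notin N_1(x)\cup\{x\}: \exists e\in B,\ z\in e,\ e\cap N_1(x)\neq\emptyset\}$. Fix a vertex $v$, and for $u\in N_1(v)$ let $E_u=\{e\in B: e\cap N_1(v)=\{u\}\}$ and $V_u=\{w\in N_2(v): \exists e\in E_u,\ w\in e\}$. Then $$\sum_{u\in N_1(v)}|V_u|\le (t-1)(6t-2)\,n.$$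
   Context: A hypergraph $\mathcal{H}$ contains a graph $F$ (vertices $v_1,\dots,v_p$, edges $e_1,\dots,e_q$) as a trace if there exist distinct vertices $w_1,\dots,w_p\in V(\mathcal{H})$ and distinct edges $f_1,\dots,f_q\in E(\mathcal{H})$ such that whenever $e_i=v_\alpha v_\beta$, $f_i\cap\{w_1,\dots,w_p\}=\{w_\alpha,w_\beta\}$. The co-degree of a pair $\{x,y\}$ in $\mathcal{H}$ is the number of edges of $\mathcal{H}$ containing $\{x,y\}$. $\mathcal{H}\setminus A$ denotes the hypergraph on $V(\mathcal{H})$ with edge set $E(\mathcal{H})\setminus A$. *)

From mathcomp Require Import all_boot.
Set Implicit Arguments. Unset Strict Implicit. Unset Printing Implicit Defensive.

Definition uniform3 (T : finType) (H : {set {set T}}) : Prop :=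
  forall e, e \in H -> #|e| = 3.

Definition contains_trace (VF T : finType) (EF : {set {set VF}})
    (H : {set {set T}}) : Prop :=
  exists (w : VF -> T) (f : {set VF} -> {set T}),
    injective w /\ {in EF &, injective f} /\
    forall e, e \in EF -> f e \in H /\ f e :&: (w @: [set: VF]) = w @: e.

Definition K2t_edges (t : nat) : {set {set ('I_2 + 'I_t)%type}} :=
  [set [set inl i; inr j] | i : 'I_2, j : 'I_t].

Definition contains_K2t_trace (T : finType) (t : nat) (H : {set {set T}}) :=
  contains_trace (K2t_edges t) H.

Section Nbhd.
Variables (T : finType) (H : {set {set T}}).

Definition codeg (x y : T) : nat := #|[set e in H | (x \in e) && (y \in e)]|.

Definition edgesA : {set {set T}} :=
  [set e in H | [exists x in e, exists y in e, (x != y) && (codeg x y == 1)]].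

Definition edgesB : {set {set T}} := H :\: edgesA.

Definition N1 (x : T) : {set T} :=
  [set z | (z != x) && [exists e in edgesB, (x \in e) && (z \in e)]].

Definition N2 (x : T) : {set T} :=
  [set z | (z \notin N1 x) && (z != x) &&
           [exists e in edgesB, (z \in e) && (e :&: N1 x != set0)]].

Definition E_u (v u : T) : {set {set T}} :=
  [set e in edgesB | e :&: N1 v == [set u]].

Definition V_u (v u : T) : {set T} :=
  [set w in N2 v | [exists e in E_u v u, w \in e]].
End Nbhd.

From mathcomp Require Import all_boot zify.
Set Implicit Arguments. Unset Strict Implicit. Unset Printing Implicit Defensive.

(* Double counting over w reduces the bound to: each w lies in V_u for at most
   3(t-1) vertices u of N1(v).  For such a u the pair {v,u} lies in a B-edge, so
   its co-degree is at least 2 and some edge {v,u,p(u)} avoids w; moreover some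
   edge of E_u contains w, avoids v and meets N1(v) only in u.  The map p has no
   fixed points, so a third of these u form a set S with p(S) disjoint from S.
   Were there more than 3(t-1) of them, v and w together with t vertices of S,
   joined by the edges {v,u,p(u)} and the chosen edges of E_u, would form a
   trace of K_{2,t}. *)

Lemma sum_card_mem (I J : finType) (A : {pred I}) (F : I -> {set J}) :
  \sum_(i in A) #|F i| = \sum_j #|[set i in A | j \in F i]|.
Proof.
rewrite (eq_bigr (fun i => \sum_(j in F i) 1)) => [|i _]; last by rewrite sum1_card.
rewrite (exchange_big_dep predT) //=; apply: eq_bigr => j _.
by rewrite -sum1_card; apply: eq_bigl => i; rewrite inE.
Qed.

Section FunctionalDigraph.
Variables (T : finType) (f : T -> T).

Lemma sum_card_fibers (U : {set T}) :
  \sum_(u in U) #|[set x in U | f x == u]| <= #|U|.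
Proof.
rewrite sum_card_mem -sum1_card [X in _ <= X]big_mkcond /=; apply: leq_sum => x _.
case: ifP => xU; last first.
  by rewrite leqn0 cards_eq0; apply/eqP/setP => y; rewrite !inE xU andbF.
apply/card_le1P => y; rewrite !inE xU /= => /andP[yU /eqP fxy] z.
by rewrite !inE xU /= fxy eq_sym; case: eqP => [->|]; rewrite ?yU ?andbF.
Qed.

Lemma exists_small_fiber (U : {set T}) : U != set0 ->
  exists2 u, u \in U & #|[set x in U | f x == u]| <= 1.
Proof.
move=> U0; apply/exists_inP; apply: contraLR (sum_card_fibers U).
rewrite negb_exists_in => /forall_inP big_fibers; rewrite -ltnNge.
apply: (@leq_trans (\sum_(u in U) 2)).
  by rewrite sum_nat_const; move: U0; rewrite -card_gt0; lia.
by apply: leq_sum => u /big_fibers; rewrite -ltnNge.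
Qed.

Lemma fixfree_independent_subset (U : {set T}) : {in U, forall u, f u != u} ->
  exists2 S : {set T}, S \subset U & #|U| <= 3 * #|S| /\ {in S &, forall x y, f x != y}.
Proof.
have [n] := ubnP #|U|; elim: n U => // n IH U ltUn fixfree.
have [-> | U0] := eqVneq U set0.
  by exists set0; rewrite ?sub0set ?cards0 //; split=> // x; rewrite inE.
have [u uU small_fiber] := exists_small_fiber U0.
(* Keep u, and discard f u and the at most one preimage of u from the rest. *)
pose R := [set u; f u] :|: [set x in U | f x == u].
have uR : u \in R by rewrite !inE eqxx.
have ltU'n : #|U :\: R| < n.
  suff : #|U :\: R| < #|U| by lia.
  apply: proper_card; apply/properP.
  by split; [exact: subsetDl | exists u; rewrite // inE uR].
have [S' S'U' [leU'S' indepS']] :=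
  IH _ ltU'n (sub_in1 (subsetP (subsetDl U R)) fixfree).
have S'R x : x \in S' -> (x \in U) && (x \notin R).
  by move/(subsetP S'U'); rewrite inE andbC.
exists (u |: S').
  by apply/subsetP => x /setU1P[-> // | /S'R /andP[]].
split.
  have leR : #|R| <= 3.
    apply: leq_trans (leq_card_setU _ _) _.
    by rewrite cards2; case: (u != f u) small_fiber; lia.
  have uS' : u \notin S' by apply/negP => /S'R; rewrite uR andbF.
  rewrite cardsU1 uS' mulnDr muln1 -(cardsID R U) (setIC U R).
  by rewrite leq_add // (leq_trans (subset_leq_card (subsetIl R U))).
move=> x y /setU1P[-> | xS'] /setU1P[-> | yS'].
- exact: fixfree.
- by apply: contraTneq yS' => <-; apply/negP => /S'R; rewrite !inE eqxx orbT andbF.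
- have /andP[xU xR] := S'R x xS'; apply: contraNneq xR => fxu.
  by rewrite !inE xU fxu eqxx !orbT.
- exact: indepS'.
Qed.

End FunctionalDigraph.

Lemma cards3_third (T : finType) (e : {set T}) (x y : T) :
  #|e| = 3 -> x \in e -> y \in e -> x != y ->
  exists2 z, z \notin [set x; y] & e = [set x; y; z].
Proof.
move=> e3 xe ye xy.
have sub_xy : [set x; y] \subset e by rewrite subUset !sub1set xe ye.
have /cards1P[z ez] : #|e :\: [set x; y]| == 1 by rewrite cardsDS // e3 cards2 xy.
have : z \in e :\: [set x; y] by rewrite ez set11.
case/setDP=> _ zxy; exists z => //.
by rewrite -{1}(setID e [set x; y]) (setIidPr sub_xy) ez.
Qed.

Section Neighbourhoods.
Variables (T : finType) (H : {set {set T}}).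

Lemma codeg_gt1_third (x y z : T) : uniform3 H -> x != y -> 1 < codeg H x y ->
  exists2 c, c \notin [set x; y] & c != z /\ [set x; y; c] \in H.
Proof.
move=> H3 xy /card_gt1P[e1 [e2 [+ + e12]]].
rewrite !inE => /and3P[e1H xe1 ye1] /and3P[e2H xe2 ye2].
have [c1 c1xy e1E] := cards3_third (H3 _ e1H) xe1 ye1 xy.
have [c2 c2xy e2E] := cards3_third (H3 _ e2H) xe2 ye2 xy.
have [c1z | c1z] := eqVneq c1 z; last by exists c1; rewrite -?e1E.
exists c2; rewrite -?e2E //; split=> //.
by apply: contraNneq e12 => c2z; rewrite e1E e2E c1z c2z.
Qed.

Lemma N1_codeg_gt1 (v u : T) : u \in N1 H v -> 1 < codeg H v u.
Proof.
rewrite inE => /andP[uv /exists_inP[e /setDP[eH eA] /andP[ve ue]]].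
have : 0 < codeg H v u by apply/card_gt0P; exists e; rewrite inE eH ve ue.
rewrite leq_eqVlt => /orP[/eqP c1 | //]; case/negP: eA.
rewrite inE eH; apply/exists_inP; exists v => //; apply/exists_inP; exists u => //.
by rewrite eq_sym uv -c1.
Qed.

Lemma V_u_N1 (v u w : T) : w \in V_u H v u -> w \notin N1 H v /\ w != v.
Proof. by rewrite inE => /andP[+ _]; rewrite inE => /andP[/andP[]]. Qed.

Lemma V_u_edge (v u w : T) : w \in V_u H v u ->
  exists2 e, e \in H & [/\ e :&: N1 H v = [set u], w \in e & v \notin e].
Proof.
move=> wVu; have [wN1 wv] := V_u_N1 wVu.
move: wVu; rewrite inE => /andP[_ /exists_inP[e]].
rewrite inE => /andP[eB /eqP eN1] we; exists e; first by case/setDP: eB.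
split=> //; apply: contraNN wN1 => ve.
by rewrite inE wv; apply/exists_inP; exists e; rewrite ?ve ?we.
Qed.

End Neighbourhoods.

Section K2tTrace.
Variables (T : finType) (t : nat) (H : {set {set T}}).

Lemma K2t_edge_inj (i i' : 'I_2) (j j' : 'I_t) :
  [set inl i; inr j] = [set inl i'; inr j'] :> {set 'I_2 + 'I_t} -> i = i' /\ j = j'.
Proof.
move=> /setP eqE; have := eqE (inl i); have := eqE (inr j).
by rewrite !inE !eqxx => /esym/eqP[->] /esym/orP[/eqP[->] | /eqP].
Qed.

Lemma K2t_trace_of_edges (w : 'I_2 + 'I_t -> T) (F : 'I_2 -> 'I_t -> {set T}) :
  injective w ->
  (forall i j, F i j \in H /\ F i j :&: (w @: setT) = w @: [set inl i; inr j]) ->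
  contains_K2t_trace t H.
Proof.
move=> w_inj traceF.
pose f E := if [pick p | E == [set inl p.1; inr p.2]] is Some p then F p.1 p.2 else set0.
have fE i j : f [set inl i; inr j] = F i j.
  rewrite /f; case: pickP => [[i' j'] /eqP/K2t_edge_inj[<- <-] // | /(_ (i, j))].
  by rewrite eqxx.
exists w, f; split=> //; split=> [E1 E2 | E].
  move=> /imset2P[i1 j1 _ _ ->] /imset2P[i2 j2 _ _ ->]; rewrite !fE => eqF.
  apply: (imset_inj w_inj).
  by have [_ <-] := traceF i1 j1; have [_ <-] := traceF i2 j2; rewrite eqF.
by case/imset2P=> i j _ _ ->; rewrite fE.
Qed.

Lemma K2t_trace_of_fans (a b : T) (S : {set T}) (Fa Fb : T -> {set T}) :
  t <= #|S| -> a != b -> a \notin S -> b \notin S ->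
  {in S, forall x, Fa x \in H /\ Fa x :&: ([set a; b] :|: S) = [set a; x]} ->
  {in S, forall x, Fb x \in H /\ Fb x :&: ([set a; b] :|: S) = [set b; x]} ->
  contains_K2t_trace t H.
Proof.
move=> leS ab aS bS fanA fanB.
pose g (j : 'I_t) : T := enum_val (widen_ord leS j).
have gS j : g j \in S by apply: enum_valP.
have g_inj : injective g by move=> j k /enum_val_inj/(congr1 val)/=/val_inj.
pose apex (i : 'I_2) := if i == ord0 then a else b.
have apex_inj : injective apex.
  move=> i i' eq_apex; apply: val_inj; move: i i' eq_apex.
  move=> [[|[|//]] ?] [[|[|//]] ?]; rewrite /apex /= => // /eqP.
    by rewrite (negbTE ab).
  by rewrite eq_sym (negbTE ab).
have apexS i : apex i \notin S by rewrite /apex; case: ifP.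
pose w x := match x with inl i => apex i | inr j => g j end.
have w_inj : injective w.
  move=> [i|j] [i'|j'] //= => [/apex_inj -> // | eqw | eqw | /g_inj -> //].
  - by have := apexS i; rewrite eqw gS.
  - by have := apexS i'; rewrite -eqw gS.
have wW : w @: setT \subset [set a; b] :|: S.
  apply/subsetP => _ /imsetP[[i|j] _ ->]; rewrite !inE ?gS ?orbT //=.
  by rewrite /apex; case: ifP; rewrite eqxx ?orbT.
pose F (i : 'I_2) (j : 'I_t) := if i == ord0 then Fa (g j) else Fb (g j).
apply: (K2t_trace_of_edges (F := F) w_inj) => i j.
have [FH FW] : F i j \in H /\ F i j :&: ([set a; b] :|: S) = [set apex i; g j].
  by rewrite /F /apex; case: ifP => _; [apply: fanA | apply: fanB].
split=> //; rewrite -(setIidPr wW) setIA FW imsetU1 imset_set1.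
apply/setIidPl; rewrite subUset !sub1set.
by rewrite !(@imset_f _ _ w _ (inl i)) ?(@imset_f _ _ w _ (inr j)) ?inE.
Qed.

End K2tTrace.

Lemma card_V_u_containing (T : finType) (t : nat) (H : {set {set T}}) (v w : T) :
  uniform3 H -> ~ contains_K2t_trace t H ->
  #|[set u in N1 H v | w \in V_u H v u]| <= 3 * (t - 1).
Proof.
move=> H3 noK; set U := [set u in N1 H v | w \in V_u H v u].
rewrite leqNgt; apply/negP => bigU; apply: noK.
have [u0] : exists u0, u0 \in U by apply/card_gt0P; apply: leq_ltn_trans bigU.
rewrite inE => /andP[_ /V_u_N1[wN1 wv]].
have vN1 : v \notin N1 H v by rewrite inE eqxx.
have UN1 : U \subset N1 H v by apply/subsetP => u; rewrite inE => /andP[].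
have /fin_all_exists[p Pp] : forall u, exists c, u \in U ->
    [/\ c \notin [set v; u], c != w & [set v; u; c] \in H].
  move=> u; case uU: (u \in U); last by exists u.
  have uN1 := subsetP UN1 u uU.
  have vu : v != u by apply: contraTneq uN1 => <-.
  by have [c ? []] := codeg_gt1_third w H3 vu (N1_codeg_gt1 uN1); exists c.
have /fin_all_exists[e Pe] : forall u, exists e, u \in U ->
    [/\ e \in H, e :&: N1 H v = [set u], w \in e & v \notin e].
  move=> u; case uU: (u \in U); last by exists set0.
  by move: uU; rewrite inE => /andP[_ /V_u_edge[e ? []]]; exists e.
have fixfree : {in U, forall u, p u != u}.
  by move=> u /Pp[+ _ _]; apply: contraNneq => ->; rewrite !inE eqxx orbT.
have [S SU [leUS indepS]] := fixfree_independent_subset fixfree.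
have SN1 : S \subset N1 H v := subset_trans SU UN1.
apply: (K2t_trace_of_fans (Fa := fun x => [set v; x; p x]) (Fb := e) _ _
          (contraNN (subsetP SN1 v) vN1) (contraNN (subsetP SN1 w) wN1)).
- lia.
- by rewrite eq_sym.
- move=> x xS; have [_ pxw FH] := Pp x (subsetP SU x xS); split=> //.
  apply/setP => y; rewrite !inE.
  have [-> | yv] := eqVneq y v; first by [].
  have [-> | yx] := eqVneq y x; first by rewrite xS !orbT.
  case: eqP => [-> | _] //=; rewrite (negbTE pxw) /=.
  by apply/negP => pxS; have := indepS x (p x) xS pxS; rewrite eqxx.
- move=> x xS; have [eH eN1 we ve] := Pe x (subsetP SU x xS); split=> //.
  have xe : x \in e x by have := set11 x; rewrite -eN1 => /setIP[].
  apply/setP => y; rewrite !inE.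
  have [-> | yw] := eqVneq y w; first by rewrite we !orbT.
  have [-> | yx] := eqVneq y x; first by rewrite xe xS !orbT.
  apply/negP => /andP[ye /orP[/orP[/eqP yv | //] | yS]].
    by rewrite -yv ye in ve.
  have : y \in e x :&: N1 H v by rewrite inE ye (subsetP SN1).
  by rewrite eN1 inE (negbTE yx).
Qed.

Theorem mainTheorem8 (T : finType) (t : nat) (H : {set {set T}}) (v : T) :
  3 <= t ->
  uniform3 H ->
  ~ contains_K2t_trace t H ->
  \sum_(u in N1 H v) #|V_u H v u| <= (t - 1) * (6 * t - 2) * #|T|.
Proof.
move=> t3 H3 noK; rewrite sum_card_mem.
apply: (@leq_trans (\sum_(w : T) 3 * (t - 1))).
  by apply: leq_sum => w _; apply: card_V_u_containing.
rewrite sum_nat_const [leqRHS]mulnC leq_mul // mulnC leq_mul2l; lia.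
Qed.
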